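(* Let $X$ be a topological space, $Y$ an infinite completely regular space, and $(g,h)$ a stable pair of Hahn on $X$. Then there exists a separately continuous function $f:X\times Y\to\overline{\mathbb R}$ such that $\min_{y\in Y}f(x,y)=g(x)$ and $\max_{y\in Y}f(x,y)=h(x)$ for every $x\in X$ (in particular $\wedge_f=g$ and $\vee_f=h$).
   Context: Completely regular spaces are assumed $T_1$. $\overline{\mathbb R}=[-\infty,+\infty]$. $\wedge_f(x)=\inf_{y\in Y}f(x,y)$, $\vee_f(x)=\sup_{y\in Y}f(x,y)$. A pair $(g,h)$ of functions $X\to\overline{\mathbb R}$ is a stable pair of Hahn if there are continuous $u_n:X\to\overline{\mathbb R}$ with $g(x)=\min_{n\in\mathbb N}u_n(x)$ and $h(x)=\max_{n\in\mathbb N}u_n(x)$ for all $x\in X$ (attained). $f$ is separately continuous if it is continuous in each variable when the other is fixed. *)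

From HB Require Import structures.
From mathcomp Require Import all_boot all_order all_algebra.
From mathcomp Require Import all_classical all_reals all_analysis.
Set Implicit Arguments. Unset Strict Implicit. Unset Printing Implicit Defensive.
Import Order.TTheory GRing.Theory Num.Theory numFieldTopology.Exports numFieldNormedType.Exports.
Local Open Scope classical_set_scope.
Local Open Scope ring_scope.

(* Completely regular (Tychonoff convention of the paper: includes T1):
   points and closed sets are separated by continuous real-valued functions. *)
Definition completely_regular (R : realType) (T : topologicalType) : Prop :=
  accessible_space T /\
  forall (a : T) (B : set T), closed B -> ~ B a ->
    exists u : T -> R, continuous u /\ u a = 0 /\ (forall b, B b -> u b = 1).

Definition is_min_attained (R : realType) (I : Type) (F : I -> \bar R) (m : \bar R) :=
  (exists i, F i = m) /\ (forall i, (m <= F i)%E).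
Definition is_max_attained (R : realType) (I : Type) (F : I -> \bar R) (m : \bar R) :=
  (exists i, F i = m) /\ (forall i, (F i <= m)%E).

Definition stable_Hahn_pair (R : realType) (X : topologicalType)
  (g h : X -> \bar R) : Prop :=
  exists u : nat -> X -> \bar R,
    (forall n, continuous (u n)) /\
    (forall x, is_min_attained (fun n => u n x) (g x)
            /\ is_max_attained (fun n => u n x) (h x)).

Definition separately_continuous (R : realType) (X Y : topologicalType)
  (f : X * Y -> \bar R) : Prop :=
  (forall x : X, continuous (fun y : Y => f (x, y))) /\
  (forall y : Y, continuous (fun x : X => f (x, y))).

From HB Require Import structures.
From mathcomp Require Import all_boot all_order all_algebra.
From mathcomp Require Import all_classical all_reals all_analysis.
From mathcomp Require Import ring lra.
Set Implicit Arguments. Unset Strict Implicit. Unset Printing Implicit Defensive.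
Import Order.TTheory GRing.Theory Num.Theory numFieldTopology.Exports numFieldNormedType.Exports.
Local Open Scope classical_set_scope.
Local Open Scope ring_scope.

(* Transport everything to [-1, 1] with [contract].  With c := u_0, the running
   minima m_n := min_(i <= n) u_i decrease to g and reach it after finitely many
   steps at each point; rescaled tents of the drops m_n - m_(n+1) then give
   continuous a_j with g <= a_j <= h, each point x having a_j x = c x for all but
   finitely many j and g x, h x among the values a_j x (the maximum side by
   negation).  On the infinite completely regular Y, splitting cozero sets
   repeatedly gives continuous bumps phi_j with phi_j y_j = 1 and pairwise disjoint
   cozero sets.  Then f x y = c x + sum_j phi_j y * (a_j x - c x) is a finite sum
   for fixed x and a single term for fixed y, lies between g x and h x, and equals
   a_j x at y_j. *)

Lemma continuous_contract (R : realType) (T : topologicalType) (F : T -> \bar R) :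
  continuous (@contract R \o F) <-> continuous F.
Proof.
by split=> cF x; apply/cvg_ballP => e e0; move/cvg_ballP: (cF x) => /(_ e e0).
Qed.

Section peak.
Variable R : realType.

Definition tent (s : R) := Num.max 0 (Num.min 1 (Num.min s (3 - s))).

Lemma tent_continuous : continuous tent.
Proof.
apply: max_fun_continuous; first exact: cst_continuous.
apply: min_fun_continuous; first exact: cst_continuous.
apply: min_fun_continuous => s; first exact: cvg_id.
by apply: cvgB; [exact: cvg_cst | exact: cvg_id].
Qed.

Lemma tent_itv s : 0 <= tent s <= 1.
Proof. by rewrite /tent le_max lexx ge_max ler01 ge_min lexx. Qed.

Lemma tent_eq1 s : 1 <= s <= 2 -> tent s = 1.
Proof.
by move=> /andP[s1 s2]; rewrite /tent min_l ?max_r // le_min s1 lerBrDl; lra.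
Qed.

Lemma tent_neq0 s : tent s != 0 -> 0 < s < 3.
Proof.
apply: contraR; rewrite negb_and -!leNgt => s_out.
by rewrite /tent max_l // !ge_min subr_le0; case/orP: s_out => ->; rewrite ?orbT.
Qed.

Definition peak (k : nat) (t : R) := tent (k.+1%:R * Num.min t 1).

Lemma peak_continuous k : continuous (peak k).
Proof.
have min1_cont : continuous (fun t : R => Num.min t 1).
  by apply: min_fun_continuous => [t|]; [exact: cvg_id | exact: cst_continuous].
have scaled_tent_cont : continuous (fun s : R => tent (k.+1%:R * s)).
  move=> s; apply: (@continuous_comp _ _ _ ( *%R (k.+1%:R : R)) tent).
    exact: mulrl_continuous.
  exact: tent_continuous.
by move=> t; exact: (@continuous_comp _ _ _ (fun t : R => Num.min t 1)
  (fun s : R => tent (k.+1%:R * s)) _ (min1_cont t) (scaled_tent_cont _)).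
Qed.

Lemma peak_itv k t : 0 <= peak k t <= 1.
Proof. exact: tent_itv. Qed.

Lemma peak0 k : peak k 0 = 0.
Proof.
by apply/eqP; apply: contraT => /tent_neq0; rewrite min_l ?ler01 // mulr0 ltxx.
Qed.

Lemma peak_attains t : 0 < t -> exists k, peak k t = 1.
Proof.
move=> t_gt0; set s := Num.min t 1.
have s_gt0 : 0 < s by rewrite lt_min t_gt0 ltr01.
have s_le1 : s <= 1 by rewrite ge_min lexx orbT.
have /andP[k_le k_gt] : (Num.truncn s^-1)%:R <= s^-1 < (Num.truncn s^-1).+1%:R.
  by rewrite truncn_itv // invr_ge0 ltW.
exists (Num.truncn s^-1); rewrite /peak -/s; apply: tent_eq1.
move: k_le k_gt; set k := Num.truncn _ => k_le k_gt.
have ks_le1 : k%:R * s <= 1 by rewrite -ler_pdivlMr // div1r.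
have ks_gt1 : 1 < k.+1%:R * s by rewrite -ltr_pdivrMr // div1r.
by rewrite ltW //= -addn1 natrD mulrDl mul1r; lra.
Qed.

Lemma finite_peak_support t : finite_set [set k | peak k t != 0].
Proof.
apply: (sub_finite_set _ (finite_II (Num.truncn (3 / Num.min t 1)).+1)).
move=> k /tent_neq0 /andP[ks_gt0 ks_lt3]; rewrite /= ltnS.
have s_gt0 : 0 < Num.min t 1 by move: ks_gt0; rewrite pmulr_rgt0.
rewrite truncn_ge_nat ?divr_ge0 ?ltW // ltr_pdivlMr //.
by apply: le_lt_trans ks_lt3; rewrite ler_pM2r // ler_nat.
Qed.

End peak.

Section lower_modification.
Variables (R : realType) (X : topologicalType).
Variables (m : nat -> X -> R) (G : X -> R).
Hypothesis m_cont : forall n, continuous (m n).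
Hypothesis m_nonincr : forall n x, m n.+1 x <= m n x.
Hypothesis G_le_m : forall n x, G x <= m n x.
Hypothesis m_reaches_G : forall x, exists n, m n x = G x.

(* Equal to m 0 x where the drop at n vanishes, and to m n.+1 x where the k-th
   peak of that drop is 1. *)
Definition lower_mod (nk : nat * nat) x :=
  m 0 x - peak nk.2 (m nk.1 x - m nk.1.+1 x) * (m 0 x - m nk.1.+1 x).

Lemma m_antitone x : {homo m^~ x : n p / (n <= p)%N >-> p <= n}.
Proof. exact/nonincreasing_seqP/(m_nonincr^~ x). Qed.

Lemma m_eq_G_from x N n : m N x = G x -> (N <= n)%N -> m n x = G x.
Proof. by move=> mN_G Nn; apply/eqP; rewrite eq_le G_le_m -mN_G m_antitone. Qed.

Lemma lower_mod_continuous nk : continuous (lower_mod nk).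
Proof.
move=> x; apply: cvgB; first exact: m_cont.
apply: cvgM; last by apply: cvgB; exact: m_cont.
apply: (@continuous_comp _ _ _ (fun x => m nk.1 x - m nk.1.+1 x) (peak nk.2)).
  by apply: cvgB; exact: m_cont.
exact: peak_continuous.
Qed.

Lemma lower_mod_itv nk x : G x <= lower_mod nk x <= m 0 x.
Proof.
rewrite /lower_mod; set p := peak _ _.
have /andP[p_ge0 p_le1] : 0 <= p <= 1 by exact: peak_itv.
have drop_ge0 : 0 <= m 0 x - m nk.1.+1 x by rewrite subr_ge0 m_antitone.
have := ler_piMl drop_ge0 p_le1; have := G_le_m nk.1.+1 x.
by move=> G_le pd_le; rewrite lerBlDr lerDl mulr_ge0 // andbT; lra.
Qed.

Lemma finite_lower_mod_support x : finite_set [set nk | lower_mod nk x != m 0 x].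
Proof.
have [N mN_G] := m_reaches_G x.
pose peaks n := [set k | peak k (m n x - m n.+1 x) != 0].
apply: (@sub_finite_set _ _ (`I_N `*`` peaks)).
  move=> [n k]; rewrite /lower_mod /= => mod_neq.
  have peak_neq0 : peak k (m n x - m n.+1 x) != 0.
    by apply: contraNneq mod_neq => ->; rewrite mul0r subr0.
  split => //; rewrite /= ltnNge; apply: contraNN peak_neq0 => Nn.
  by rewrite !(m_eq_G_from mN_G) ?subrr ?peak0 // ltnW.
by apply: finite_setXR => [|n _]; [exact: finite_II | exact: finite_peak_support].
Qed.

Lemma lower_mod_attains x : exists nk, lower_mod nk x = G x.
Proof.
have /ex_minnP[N /eqP mN_G N_min] : exists N, m N x == G x.
  by have [N mN_G] := m_reaches_G x; exists N; rewrite mN_G.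
case: N => [|n] in mN_G N_min *.
  exists (0, 0)%N; apply/eqP; rewrite eq_le (andP (lower_mod_itv _ _)).1 andbT.
  by rewrite -mN_G (andP (lower_mod_itv _ _)).2.
have mn_neq_G : m n x != G x by apply/negP => /N_min; rewrite ltnn.
have drop_gt0 : 0 < m n x - m n.+1 x.
  by rewrite mN_G subr_gt0 lt_neqAle eq_sym mn_neq_G G_le_m.
have [k peak1] := peak_attains drop_gt0.
by exists (n, k); rewrite /lower_mod /= peak1 mul1r subKr.
Qed.

End lower_modification.

Section running_min.
Variables (R : realType) (X : topologicalType) (U : nat -> X -> R).

Fixpoint running_min n x :=
  if n is k.+1 then Num.min (running_min k x) (U k.+1 x) else U 0 x.

Lemma running_min_continuous n :
  (forall i, continuous (U i)) -> continuous (running_min n).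
Proof. by move=> U_cont; elim: n => [|n IH] //=; exact: min_fun_continuous. Qed.

Lemma running_min_le n i x : (i <= n)%N -> running_min n x <= U i x.
Proof.
elim: n => [|n IH] /=; first by rewrite leqn0 => /eqP ->.
rewrite leq_eqVlt ltnS ge_min => /orP[/eqP ->|/IH ->]; by rewrite ?lexx ?orbT.
Qed.

Lemma le_running_min n x c : (forall i, c <= U i x) -> c <= running_min n x.
Proof. by move=> c_le; elim: n => [|n IH] //=; rewrite le_min IH c_le. Qed.

End running_min.

Lemma lower_modifications (R : realType) (X : topologicalType)
    (U : nat -> X -> R) (G : X -> R) :
  (forall n, continuous (U n)) ->
  (forall x, (exists n, U n x = G x) /\ (forall n, G x <= U n x)) ->
  exists A : nat * nat -> X -> R,
    [/\ forall nk, continuous (A nk),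
        forall nk x, G x <= A nk x <= U 0 x,
        forall x, finite_set [set nk | A nk x != U 0 x]
      & forall x, exists nk, A nk x = G x].
Proof.
move=> U_cont U_env; pose m := running_min U.
have m_nonincr n x : m n.+1 x <= m n x by rewrite /= ge_min lexx.
have G_le_m n x : G x <= m n x by apply: le_running_min; exact: (U_env x).2.
have m_reaches_G x : exists n, m n x = G x.
  have [[N UN_G] _] := U_env x; exists N; apply/eqP.
  by rewrite eq_le G_le_m -UN_G running_min_le.
exists (lower_mod m); split.
- by move=> nk; apply: lower_mod_continuous => n; exact: running_min_continuous.
- exact: lower_mod_itv.
- exact: finite_lower_mod_support.
- exact: lower_mod_attains.
Qed.

Lemma upper_modifications (R : realType) (X : topologicalType)
    (U : nat -> X -> R) (H : X -> R) :
  (forall n, continuous (U n)) ->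
  (forall x, (exists n, U n x = H x) /\ (forall n, U n x <= H x)) ->
  exists B : nat * nat -> X -> R,
    [/\ forall nk, continuous (B nk),
        forall nk x, U 0 x <= B nk x <= H x,
        forall x, finite_set [set nk | B nk x != U 0 x]
      & forall x, exists nk, B nk x = H x].
Proof.
move=> U_cont envH.
have [|x|A [A_cont A_itv A_fin A_att]] :=
  lower_modifications (U := fun n x => - U n x) (G := fun x => - H x).
- by move=> n x; apply: cvgN; exact: U_cont.
- have [[N UN_H] U_le_H] := envH x.
  by split=> [|n]; [exists N; rewrite UN_H | rewrite lerN2].
exists (fun nk x => - A nk x); split.
- by move=> nk x; apply: cvgN; exact: A_cont.
- by move=> nk x; rewrite lerNr lerNl andbC.
- by move=> x; apply: sub_finite_set (A_fin x) => nk /=; rewrite eqr_oppLR.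
- by move=> x; have [nk A_eq] := A_att x; exists nk; rewrite A_eq opprK.
Qed.

Lemma eventually_eq_of_finite_neq (T : eqType) (f : nat -> T) (t : T) :
  finite_set [set j | f j != t] -> exists n, forall j, (n <= j)%N -> f j = t.
Proof.
move=> /finite_seqP[s s_eq]; exists (\max_(i <- s) i)%N.+1 => j.
apply: contraTeq => fj_neq; rewrite -ltnNge ltnS leq_bigmax_seq //.
by have : [set` s] j by rewrite -s_eq.
Qed.

Lemma envelope_interpolants (R : realType) (X : topologicalType)
    (U : nat -> X -> R) (G H : X -> R) :
  (forall n, continuous (U n)) ->
  (forall x, (exists n, U n x = G x) /\ (forall n, G x <= U n x)) ->
  (forall x, (exists n, U n x = H x) /\ (forall n, U n x <= H x)) ->
  exists a : nat -> X -> R,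
    [/\ forall j, continuous (a j),
        forall j x, G x <= a j x <= H x,
        forall x, exists n, forall j, (n <= j)%N -> a j x = U 0 x
      & forall x, (exists j, a j x = G x) /\ (exists j, a j x = H x)].
Proof.
move=> U_cont envG envH.
have [A [A_cont A_itv A_fin A_att]] := lower_modifications U_cont envG.
have [B [B_cont B_itv B_fin B_att]] := upper_modifications U_cont envH.
pose b (p : nat * nat + nat * nat) := match p with inl nk => A nk | inr nk => B nk end.
pose a j := if pickle_inv j is Some p then b p else U 0.
have a_pickle p : a (pickle p) = b p by rewrite /a pickleK_inv.
have G_le_U0 x : G x <= U 0 x := (envG x).2 0.
have U0_le_H x : U 0 x <= H x := (envH x).2 0.
exists a; split.
- move=> j; rewrite /a; case: pickle_inv => [[nk|nk]|] /=.
  + exact: A_cont.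
  + exact: B_cont.
  + exact: U_cont.
- move=> j x; rewrite /a; case: pickle_inv => [[nk|nk]|] /=.
  + by have /andP[G_le A_le] := A_itv nk x; rewrite G_le (le_trans A_le).
  + by have /andP[U0_le B_le] := B_itv nk x; rewrite B_le (le_trans (G_le_U0 x)).
  + by rewrite G_le_U0 U0_le_H.
- move=> x; apply: (eventually_eq_of_finite_neq (f := a^~ x)).
  pose p_inl := pickle \o @inl (nat * nat) (nat * nat).
  pose p_inr := pickle \o @inr (nat * nat) (nat * nat).
  apply: (@sub_finite_set _ _ (p_inl @` [set nk | A nk x != U 0 x]
      `|` p_inr @` [set nk | B nk x != U 0 x])).
    move=> j /=; have := @pickle_invK (nat * nat + nat * nat)%type j; rewrite /a.
    case: pickle_inv => [[nk|nk]|] /= j_eq a_neq; last by rewrite eqxx in a_neq.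
      by left; exists nk.
    by right; exists nk.
  by rewrite finite_setU; split; apply: finite_image; [exact: A_fin | exact: B_fin].
- move=> x; have [nk Ank] := A_att x; have [nk' Bnk'] := B_att x.
  by split; [exists (pickle (inl nk : nat * nat + nat * nat))
            | exists (pickle (inr nk' : nat * nat + nat * nat))]; rewrite a_pickle.
Qed.

Section disjoint_bumps.
Variables (R : realType) (Y : topologicalType).
Hypothesis Y_creg : completely_regular R Y.

Definition infinite_cozero (psi : Y -> R) :=
  [/\ continuous psi, forall y, 0 <= psi y & infinite_set [set y | 0 < psi y]].

Definition cozero_split (psi phi : Y -> R) (y0 : Y) (psi' : Y -> R) :=
  [/\ continuous phi, forall y, 0 <= phi y <= 1, phi y0 = 1,
      forall y, phi y != 0 -> 0 < psi y /\ psi' y = 0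
    & infinite_cozero psi' /\ forall y, 0 < psi' y -> 0 < psi y].

Lemma separating_function (a b : Y) : a <> b ->
  exists u : Y -> R, [/\ continuous u, u a = 0 & u b = 1].
Proof.
move=> ab; have [Y_acc Y_sep] := Y_creg.
have [u [u_cont [ua ub]]] := Y_sep a [set b] (@accessible_closed_set1 _ Y_acc b) ab.
by exists u; split=> //; exact: ub.
Qed.

Lemma cozero_split_at (psi u : Y -> R) (a : Y) :
  infinite_cozero psi -> 0 < psi a -> continuous u -> u a = 0 ->
  infinite_set [set y | 0 < psi y /\ 3^-1 < u y] ->
  exists phi psi', cozero_split psi phi a psi'.
Proof.
move=> [psi_cont psi_ge0 _] psia_gt0 u_cont ua0 big_u_inf.
pose phi y := Num.min 1 (psi y / psi a) * Num.min 1 (Num.max 0 (1 - 3 * u y)).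
pose psi' y := Num.min (psi y) (Num.max 0 (u y - 3^-1)).
have cst1 : continuous (cst 1 : Y -> R) by exact: cst_continuous.
have cst0 : continuous (cst 0 : Y -> R) by exact: cst_continuous.
have ratio_cont : continuous (fun y => Num.min 1 (psi y / psi a)).
  by apply: min_fun_continuous => // y; apply: cvgM; [exact: psi_cont | exact: cvg_cst].
have clamp_cont : continuous (fun y => Num.min 1 (Num.max 0 (1 - 3 * u y))).
  apply: min_fun_continuous => //; apply: max_fun_continuous => // y.
  by apply: cvgB; [exact: cvg_cst | apply: cvgM; [exact: cvg_cst | exact: u_cont]].
exists phi, psi'; split.
- by move=> y; apply: cvgM; [exact: ratio_cont | exact: clamp_cont].
- move=> y; have q_ge0 : 0 <= psi y / psi a by rewrite divr_ge0 // ltW.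
  by rewrite mulr_ge0 ?mulr_ile1 ?le_min ?ge_min ?le_max ?ler01 ?lexx ?orbT ?q_ge0.
- by rewrite /phi /= divff ?gt_eqF // ua0 mulr0 subr0 (max_r ler01) minxx mulr1.
- move=> y phi_neq0; split.
    rewrite lt_neqAle psi_ge0 andbT eq_sym; apply: contraNneq phi_neq0 => psiy0.
    by rewrite /phi psiy0 mul0r min_r // mul0r.
  have u_small : u y < 3^-1.
    rewrite ltNge; apply: contraNN phi_neq0 => u_big.
    by rewrite /phi /= max_l ?(min_r ler01) ?mulr0 //; lra.
  by rewrite /psi' max_l ?min_r ?psi_ge0 //; lra.
- split; last by move=> y; rewrite lt_min => /andP[].
  split.
  + apply: min_fun_continuous => //; apply: max_fun_continuous => // y.
    by apply: cvgB; [exact: u_cont | exact: cvg_cst].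
  + by move=> y; rewrite le_min psi_ge0 le_max lexx.
  + apply: sub_infinite_set big_u_inf => y [psiy_gt0 u_big].
    by rewrite /= lt_min psiy_gt0 lt_max subr_gt0 u_big orbT.
Qed.

Lemma cozero_split_exists psi :
  infinite_cozero psi -> exists phi y0 psi', cozero_split psi phi y0 psi'.
Proof.
move=> psi_inf; have [_ _ coz_inf] := psi_inf.
have [a psia_gt0] := infinite_setN0 coz_inf.
have [b [psib_gt0 ab]] : exists b, 0 < psi b /\ a <> b.
  apply: contrapT => no_b; apply: coz_inf; apply: (sub_finite_set _ (finite_set1 a)).
  by move=> y psiy_gt0; apply: contrapT => ya; apply: no_b; exists y; split; last exact: nesym.
have [u [u_cont ua0 ub1]] := separating_function ab.
have [big_u_fin|big_u_inf] := pselect (finite_set [set y | 0 < psi y /\ 3^-1 < u y]);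
  last first.
  have [phi [psi' split]] := cozero_split_at psi_inf psia_gt0 u_cont ua0 big_u_inf.
  by exists phi, a, psi'.
have u'_cont : continuous (fun y => 1 - u y).
  by move=> y; apply: cvgB; [exact: cvg_cst | exact: u_cont].
have u'b0 : 1 - u b = 0 by rewrite ub1 subrr.
have small_u_inf : infinite_set [set y | 0 < psi y /\ 3^-1 < 1 - u y].
  move=> small_u_fin; apply: coz_inf.
  apply: (@sub_finite_set _ _ ([set y | 0 < psi y /\ 3^-1 < u y]
      `|` [set y | 0 < psi y /\ 3^-1 < 1 - u y])); last by rewrite finite_setU.
  by move=> y psiy_gt0; have [u_big|u_small] := ltP (3^-1) (u y); [left|right]; split=> //; lra.
have [phi [psi' split]] := cozero_split_at psi_inf psib_gt0 u'_cont u'b0 small_u_inf.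
by exists phi, b, psi'.
Qed.

Lemma disjoint_bumps_exist : infinite_set [set: Y] ->
  exists (phi : nat -> Y -> R) (ys : nat -> Y),
    [/\ forall j, continuous (phi j), forall j y, 0 <= phi j y <= 1,
        forall j, phi j (ys j) = 1
      & forall i j y, phi i y != 0 -> phi j y != 0 -> i = j].
Proof.
move=> Y_inf; have [y0 _] := infinite_setN0 Y_inf.
have /choice[next next_split] : forall psi, exists t : (Y -> R) * Y * (Y -> R),
    infinite_cozero psi -> cozero_split psi t.1.1 t.1.2 t.2.
  move=> psi; have [psi_inf|psi_fin] := pselect (infinite_cozero psi).
    by have [phi [y [psi' split]]] := cozero_split_exists psi_inf; exists (phi, y, psi').
  by exists (fun=> 0, y0, fun=> 0).
pose psis n := iter n (fun psi => (next psi).2) (fun=> 1).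
have psis_inf n : infinite_cozero (psis n).
  elim: n => [|n IH]; last by have [_ _ _ _ []] := next_split _ IH.
  split=> [|y|]; [exact: cst_continuous | exact: ler01 |].
  by apply: sub_infinite_set Y_inf => y _; exact: ltr01.
have psis_split n := next_split _ (psis_inf n).
have psis_nested n k y : 0 < psis (k + n)%N y -> 0 < psis n y.
  elim: k => [//|k IH] coz; apply: IH.
  by have [_ _ _ _ [_]] := psis_split (k + n)%N; apply.
pose phi n := (next (psis n)).1.1.
have phi_ordered i j y : (i < j)%N -> phi i y != 0 -> phi j y != 0 -> False.
  move=> ij phi_i phi_j.
  have [_ _ _ phi_i_supp _] := psis_split i.
  have [_ _ _ phi_j_supp _] := psis_split j.
  have [psij_gt0 _] := phi_j_supp y phi_j; have [_ psis_i1_0] := phi_i_supp y phi_i.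
  have := psis_nested i.+1 (j - i.+1)%N y; rewrite subnK // => /(_ psij_gt0).
  by rewrite /= psis_i1_0 ltxx.
exists phi, (fun n => (next (psis n)).1.2); split=> [j|j|j|].
- by have [] := psis_split j.
- by have [] := psis_split j.
- by have [] := psis_split j.
move=> i j y phi_i phi_j; case: (ltngtP i j) => // ij.
- by case: (phi_ordered _ _ _ ij phi_i phi_j).
- by case: (phi_ordered _ _ _ ij phi_j phi_i).
Qed.

End disjoint_bumps.

Section gluing.
Variables (R : realType) (X Y : topologicalType).
Variables (c : X -> R) (a : nat -> X -> R) (phi : nat -> Y -> R) (B : X -> nat).
Hypothesis c_cont : continuous c.
Hypothesis a_cont : forall j, continuous (a j).
Hypothesis phi_cont : forall j, continuous (phi j).
Hypothesis phi_itv : forall j y, 0 <= phi j y <= 1.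
Hypothesis phi_disjoint : forall i j y, phi i y != 0 -> phi j y != 0 -> i = j.
Hypothesis a_eq_c_from : forall x j, (B x <= j)%N -> a j x = c x.

Definition glue x y := c x + \sum_(j < B x) phi j y * (a j x - c x).

Lemma glue_continuous_y x : continuous (glue x).
Proof.
move=> y; apply: cvgD; first exact: cvg_cst.
apply: continuous_big => [|j _]; first exact: add_continuous.
by move=> z; apply: cvgM; [exact: phi_cont | exact: cvg_cst].
Qed.

Lemma glue_single x y j0 : (forall j, j != j0 -> phi j y = 0) ->
  glue x y = c x + phi j0 y * (a j0 x - c x).
Proof.
move=> phi_eq0; congr (_ + _); have [j0_lt|B_le] := ltnP j0 (B x).
  rewrite (bigD1 (Ordinal j0_lt)) //= big1 ?addr0 // => j j_neq.
  by rewrite phi_eq0 ?mul0r //; apply: contraNneq j_neq => j_eq; apply/eqP/val_inj.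
rewrite a_eq_c_from // subrr mulr0 big1 // => j _.
by rewrite phi_eq0 ?mul0r // neq_ltn (leq_trans (ltn_ord j) B_le).
Qed.

Lemma glue_local y : exists j0, forall x, glue x y = c x + phi j0 y * (a j0 x - c x).
Proof.
have [[j0 phi_j0]|no_j] := pselect (exists j0, phi j0 y != 0).
  exists j0 => x; apply: glue_single => j j_neq; apply/eqP; apply: contraNT j_neq.
  by move=> phi_j; rewrite (phi_disjoint phi_j phi_j0) eqxx.
exists 0%N => x; apply: glue_single => j _; apply/eqP; apply: contraT => phi_j.
by case: no_j; exists j.
Qed.

Lemma glue_continuous_x y : continuous (glue^~ y).
Proof.
have [j0 glue_y] := glue_local y.
rewrite (_ : glue^~ y = fun x => c x + phi j0 y * (a j0 x - c x)); last exact: funext.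
move=> x; apply: cvgD; first exact: c_cont.
by apply: cvgM; [exact: cvg_cst | apply: cvgB; [exact: a_cont | exact: c_cont]].
Qed.

Lemma glue_at x y j : phi j y = 1 -> glue x y = a j x.
Proof.
move=> phi_j1; rewrite (@glue_single x y j) ?phi_j1 ?mul1r; first by rewrite addrC subrK.
move=> i i_neq; apply/eqP; apply: contraNT i_neq => phi_i.
by rewrite (phi_disjoint phi_i (_ : phi j y != 0)) ?phi_j1 ?oner_neq0.
Qed.

Lemma glue_itv x y (l r : R) :
  l <= c x <= r -> (forall j, l <= a j x <= r) -> l <= glue x y <= r.
Proof.
move=> /andP[l_c c_r] a_itv; have [j0 ->] := glue_local y.
have /andP[p_ge0 p_le1] := phi_itv j0 y; have /andP[l_a a_r] := a_itv j0.
set p := phi j0 y; set b := a j0 x.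
have lower : c x + p * (b - c x) - l = (1 - p) * (c x - l) + p * (b - l) by ring.
have upper : r - (c x + p * (b - c x)) = (1 - p) * (r - c x) + p * (r - b) by ring.
by rewrite -subr_ge0 lower -[_ <= r]subr_ge0 upper !addr_ge0 ?mulr_ge0 ?subr_ge0.
Qed.

End gluing.

Lemma separately_continuous_minmax_real (R : realType) (X Y : topologicalType)
    (U : nat -> X -> R) (G H : X -> R) :
  completely_regular R Y -> infinite_set [set: Y] ->
  (forall n, continuous (U n)) ->
  (forall x, (exists n, U n x = G x) /\ (forall n, G x <= U n x)) ->
  (forall x, (exists n, U n x = H x) /\ (forall n, U n x <= H x)) ->
  exists F : X -> Y -> R,
    [/\ forall x, continuous (F x), forall y, continuous (F^~ y),
        forall x y, G x <= F x y <= H x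
      & forall x, (exists y, F x y = G x) /\ (exists y, F x y = H x)].
Proof.
move=> Y_creg Y_inf U_cont envG envH.
have [a [a_cont a_itv a_eventually a_att]] := envelope_interpolants U_cont envG envH.
have /choice[B a_eq_U0_from] := a_eventually.
have [phi [ys [phi_cont phi_itv phi_ys phi_disj]]] := disjoint_bumps_exist Y_creg Y_inf.
exists (glue (U 0) a phi B); split.
- exact: glue_continuous_y.
- exact: glue_continuous_x.
- move=> x y; apply: glue_itv => //.
  by rewrite (envG x).2 (envH x).2.
- move=> x; have [[j aG] [j' aH]] := a_att x.
  by split; [exists (ys j) | exists (ys j')]; rewrite (glue_at _ _ _ (phi_ys _)).
Qed.

Lemma contract_expand_between (R : realType) (r : R) (e1 e2 : \bar R) :
  contract e1 <= r <= contract e2 -> contract (expand r) = r.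
Proof.
move=> /andP[e1_r r_e2]; apply: expandK; rewrite inE ler_norml.
have := contract_le1 e1; have := contract_le1 e2; rewrite !ler_norml.
by move=> /andP[_ e2_le1] /andP[le1_e1 _]; rewrite (le_trans le1_e1) ?(le_trans r_e2).
Qed.

Theorem theorem8p1 (R : realType) (X Y : topologicalType)
  (g h : X -> \bar R) :
  completely_regular R Y ->
  infinite_set [set: Y] ->
  stable_Hahn_pair g h ->
  exists f : X * Y -> \bar R,
    separately_continuous f /\
    (forall x : X, is_min_attained (fun y : Y => f (x, y)) (g x) /\
                   is_max_attained (fun y : Y => f (x, y)) (h x)).
Proof.
move=> Y_creg Y_inf [u [u_cont u_env]].
pose U n x := contract (u n x).
have U_cont n : continuous (U n) by apply/continuous_contract.
have envG x : (exists n, U n x = contract (g x)) /\ (forall n, contract (g x) <= U n x).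
  have [[[n <-] g_le] _] := u_env x.
  by split=> [|m]; [exists n | rewrite le_contract].
have envH x : (exists n, U n x = contract (h x)) /\ (forall n, U n x <= contract (h x)).
  have [_ [[n <-] le_h]] := u_env x.
  by split=> [|m]; [exists n | rewrite le_contract].
have [F [Fx_cont Fy_cont F_itv F_att]] :=
  separately_continuous_minmax_real Y_creg Y_inf U_cont envG envH.
have contract_F x y : contract (expand (F x y)) = F x y.
  exact: contract_expand_between (F_itv x y).
exists (fun xy => expand (F xy.1 xy.2)); split.
  split=> [x|y]; apply/continuous_contract.
    by rewrite (_ : _ \o _ = F x) //; apply: funext => y /=.
  by rewrite (_ : _ \o _ = F^~ y) //; apply: funext => x /=.
move=> x; have [[y Fg] [y' Fh]] := F_att x.
split; split=> [|z]; rewrite /= ?Fg ?Fh ?contractK //.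
- by exists y; rewrite Fg contractK.
- by rewrite -le_contract contract_F; case/andP: (F_itv x z).
- by exists y'; rewrite Fh contractK.
- by rewrite -le_contract contract_F; case/andP: (F_itv x z).
Qed.
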